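(* Let $R$ be a ring and $M$ a left $R$-module. Then $\mathcal N_s(M)\subseteq\langle E_M(0)\rangle\subseteq\beta_{co}(M)$.
   Context: Rings are associative with identity; modules are unital left modules. $\mathcal N_s(M)$ is the set of strongly nilpotent elements of $M$: $m$ is strongly nilpotent if $m=\sum_{i=1}^r a_im_i$ for some $a_i\in R$, $m_i\in M$, $r\in\mathbb N$ such that for every $i$ and every sequence $a_{i1},a_{i2},\dots$ with $a_{i1}=a_i$ and $a_{i,n+1}\in a_{in}Ra_{in}$ for all $n$, there is $k$ with $a_{ik}Rm_i=0$. $E_M(0)=\{rm: r\in R,m\in M, r^km=0\text{ for some }k\in\mathbb N\}$, $\langle E_M(0)\rangle$ the submodule generated. A submodule $P$ is completely prime if $RM\not\subseteq P$ and $rm\in P$ implies $m\in P$ or $rM\subseteq P$; $\beta_{co}(M)$ is the intersection of all completely prime submodules ($=M$ if none). *)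

From HB Require Import structures.
From mathcomp Require Import all_boot all_order all_algebra.
Set Implicit Arguments. Unset Strict Implicit. Unset Printing Implicit Defensive.
Import GRing.Theory.
Local Open Scope ring_scope.

Definition is_submodule (R : pzRingType) (M : lmodType R) (P : M -> Prop) : Prop :=
  [/\ P 0, (forall x y, P x -> P y -> P (x + y)) & (forall (r : R) x, P x -> P (r *: x))].

Definition gen_submod (R : pzRingType) (M : lmodType R) (S : M -> Prop) : M -> Prop :=
  fun x => forall P, is_submodule P -> (forall y, S y -> P y) -> P x.

Definition strongly_nilpotent (R : pzRingType) (M : lmodType R) (m : M) : Prop :=
  exists (r : nat) (a : 'I_r -> R) (mm : 'I_r -> M),
    m = \sum_(i < r) a i *: mm i /\
    forall (i : 'I_r) (s : nat -> R),
      s 0%N = a i ->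
      (forall n, exists x : R, s n.+1 = s n * x * s n) ->
      exists k : nat, forall x : R, (s k * x) *: mm i = 0.

Definition Ns (R : pzRingType) (M : lmodType R) : M -> Prop :=
  fun m => strongly_nilpotent m.

Definition EM0 (R : pzRingType) (M : lmodType R) : M -> Prop :=
  fun v => exists (r : R) (m : M) (k : nat), v = r *: m /\ r ^+ k *: m = 0.

Definition completely_prime (R : pzRingType) (M : lmodType R) (P : M -> Prop) : Prop :=
  [/\ is_submodule P,
      (exists (r : R) (m : M), ~ P (r *: m))          (* RM is not contained in P *)
    & (forall (r : R) (m : M), P (r *: m) -> P m \/ (forall m' : M, P (r *: m')))].

(* beta_co(M): intersection of all completely prime submodules (= M if none) *)
Definition beta_co (R : pzRingType) (M : lmodType R) : M -> Prop :=
  fun x => forall P, completely_prime P -> P x.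

From mathcomp Require Import all_boot all_order all_algebra.
Set Implicit Arguments. Unset Strict Implicit.
Import GRing.Theory.
Local Open Scope ring_scope.

(* The repeated squares a, a^2, a^4, ... form an admissible sequence
   a_(n+1) in a_n R a_n, so a strongly nilpotent decomposition sum a_i m_i has
   a_i^(2^k) m_i = 0 and each summand lies in E_M(0).  If P is completely prime
   and r^k m = 0 lies in P, then r (r^j m) in P forces r^j m in P or rM in P;
   in both cases r m in P, by induction on j. *)

Section GeneratedSubmodule.

Variables (R : pzRingType) (M : lmodType R) (S : M -> Prop).

Lemma gen_submod_sum n (f : 'I_n -> M) :
  (forall i, S (f i)) -> gen_submod S (\sum_(i < n) f i).
Proof.
move=> Sf P [P0 PD _] SP.
by elim/big_ind: _ => // i _; apply: SP.
Qed.

Lemma gen_submod_min (P : M -> Prop) :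
  is_submodule P -> (forall x, S x -> P x) -> forall x, gen_submod S x -> P x.
Proof. by move=> subP SP x; apply. Qed.

End GeneratedSubmodule.

Section StronglyNilpotent.

Variables (R : pzRingType) (M : lmodType R).

Lemma expr_pow2S (a : R) n :
  a ^+ (2 ^ n.+1) = a ^+ (2 ^ n) * 1 * a ^+ (2 ^ n).
Proof. by rewrite mulr1 -exprD expnS mul2n -addnn. Qed.

Lemma EM0_strongly_nilpotent_term (a : R) (m : M) :
  (forall s : nat -> R, s 0%N = a ->
     (forall n, exists x : R, s n.+1 = s n * x * s n) ->
     exists k : nat, forall x : R, (s k * x) *: m = 0) ->
  EM0 (a *: m).
Proof.
move=> nil_am.
have [|k am0] := nil_am (fun n => a ^+ (2 ^ n)) (expr1 a).
  by move=> n; exists 1; apply: expr_pow2S.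
by exists a, m, (2 ^ k)%N; split=> //; have := am0 1; rewrite mulr1.
Qed.

Lemma Ns_sub_gen_EM0 (m : M) : Ns m -> gen_submod (@EM0 R M) m.
Proof.
move=> [r [a [mm [-> nil_a]]]].
by apply: gen_submod_sum => i; apply: EM0_strongly_nilpotent_term; apply: nil_a.
Qed.

End StronglyNilpotent.

Section CompletelyPrime.

Variables (R : pzRingType) (M : lmodType R) (P : M -> Prop).
Hypothesis cpP : completely_prime P.

Lemma completely_prime_scale_exp (r : R) (m : M) k :
  P (r ^+ k.+1 *: m) -> P (r *: m).
Proof.
have [_ _ primeP] := cpP.
elim: k => [|k IHk]; first by rewrite expr1.
by rewrite exprS -scalerA => /primeP [/IHk | rM_P].
Qed.

Lemma EM0_sub_completely_prime (v : M) : EM0 v -> P v.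
Proof.
have [[P0 _ _] _ _] := cpP.
move=> [r [m [[|k] [-> rkm0]]]].
  by rewrite expr0 scale1r in rkm0; rewrite rkm0 scaler0.
by apply: (@completely_prime_scale_exp _ _ k); rewrite rkm0.
Qed.

End CompletelyPrime.

Lemma gen_EM0_sub_beta_co (R : pzRingType) (M : lmodType R) (m : M) :
  gen_submod (@EM0 R M) m -> beta_co m.
Proof.
move=> genm P cpP; have [subP _ _] := cpP.
exact: gen_submod_min subP (EM0_sub_completely_prime cpP) _ genm.
Qed.

Theorem lemma4p9 (R : pzRingType) (M : lmodType R) :
  (forall m : M, Ns m -> gen_submod (@EM0 R M) m) /\
  (forall m : M, gen_submod (@EM0 R M) m -> beta_co m).
Proof.
split.
- exact: Ns_sub_gen_EM0.
- exact: gen_EM0_sub_beta_co.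
Qed.
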